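(* Let $\{\varphi_n\}$ be a generalized Riesz system in a Hilbert space $\mathcal H$ with constructing pair $(\{e_n\},T)$, and put $\psi^T_n=(T^{-1})^*e_n$, $n\ge0$. Then $(\{\varphi_n\},\{\psi^T_n\})$ is a $(D(T^* ),D(T^{-1}))$-quasi basis, and $T=\big(T_{e,\psi^T}|_{D(T^{-1})}\big)^{-1}$, $(T^{-1})^*=\big(T_{e,\varphi}|_{D(T^* )}\big)^{-1}$.
   Context: A sequence $\{\varphi_n\}$ is a generalized Riesz system if there exist an ONB $\{e_n\}$ and a densely defined closed operator $T$ with densely defined inverse such that $e_n\in D(T)\cap D((T^{-1})^* )$ and $Te_n=\varphi_n$ for all $n$; $(\{e_n\},T)$ is a constructing pair. Inner product linear in the first argument. For a sequence $\{\chi_n\}$, $D(\chi)=\{x:\sum_n|\langle x,\chi_n\rangle|^2<\infty\}$ and $D_\chi$ is its linear span; $T_{e,\chi}$ is the operator with domain $D(\chi)$, $T_{e,\chi}x=\sum_n\langle x,\chi_n\rangle e_n$. For biorthogonal sequences $\{\varphi_n\},\{\psi_n\}$ (i.e. $\langle\varphi_n,\psi_m\rangle=\delta_{nm}$) and dense subspaces $\mathcal D,\mathcal E$ with $D_\psi\subseteq\mathcal D\subseteq D(\varphi)$, $D_\varphi\subseteq\mathcal E\subseteq D(\psi)$, the pair is a $(\mathcal D,\mathcal E)$-quasi basis if $\sum_k\langle x,\varphi_k\rangle\langle\psi_k,y\rangle=\langle x,y\rangle$ for all $x\in\mathcal D$, $y\in\mathcal E$. *)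

(* Complex Hilbert spaces are modelled as complete
   normed modules over Coquelicot's complex numbers C, together with an inner
   product (linear in the first argument) inducing the norm.  (Possibly
   unbounded) linear operators are modelled by their graphs. *)
From Stdlib Require Import Reals.
From Coquelicot Require Import Coquelicot.
Open Scope R_scope.

Section Hilbert.
Context {H : CompleteNormedModule C_AbsRing}.

Definition is_inner_product (ip : H -> H -> C) : Prop :=
  (forall x y z : H, ip (plus x y) z = Cplus (ip x z) (ip y z)) /\
  (forall (a : C) (x y : H), ip (scal a x) y = Cmult a (ip x y)) /\
  (forall x y : H, ip y x = Cconj (ip x y)) /\
  (forall x : H, Im (ip x x) = 0 /\ 0 <= Re (ip x x)) /\
  (forall x : H, norm x = sqrt (Re (ip x x))).

Definition subspace (D : H -> Prop) : Prop :=
  D zero /\ (forall x y, D x -> D y -> D (plus x y)) /\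
  (forall (a : C) x, D x -> D (scal a x)).

Definition dense (D : H -> Prop) : Prop :=
  forall (x : H) (eps : R), 0 < eps -> exists y, D y /\ norm (minus x y) < eps.

Inductive lin_span (chi : nat -> H) : H -> Prop :=
| ls_zero : lin_span chi zero
| ls_gen : forall n, lin_span chi (chi n)
| ls_plus : forall x y, lin_span chi x -> lin_span chi y -> lin_span chi (plus x y)
| ls_scal : forall (a : C) x, lin_span chi x -> lin_span chi (scal a x).

Definition orthonormal_basis (ip : H -> H -> C) (e : nat -> H) : Prop :=
  (forall n m, ip (e n) (e m) = if Nat.eqb n m then RtoC 1 else RtoC 0) /\
  dense (lin_span e).

Definition op := H -> H -> Prop.
Definition dom (G : op) : H -> Prop := fun x => exists y, G x y.
Definition ran (G : op) : H -> Prop := fun y => exists x, G x y.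

Definition linear_operator (G : op) : Prop :=
  (forall x y1 y2, G x y1 -> G x y2 -> y1 = y2) /\
  G zero zero /\
  (forall x y x' y', G x y -> G x' y' -> G (plus x x') (plus y y')) /\
  (forall (a : C) x y, G x y -> G (scal a x) (scal a y)).

Definition injective_op (G : op) : Prop :=
  forall x1 x2 y, G x1 y -> G x2 y -> x1 = x2.

Definition closed_op (G : op) : Prop :=
  forall (u v : nat -> H) (x y : H),
    (forall n, G (u n) (v n)) ->
    filterlim u eventually (locally x) ->
    filterlim v eventually (locally y) -> G x y.

Definition op_inv (G : op) : op := fun y x => G x y.

Definition op_adj (ip : H -> H -> C) (G : op) : op :=
  fun y z => forall x w, G x w -> ip w y = ip x z.

Definition op_restrict (G : op) (D : H -> Prop) : op := fun x y => D x /\ G x y.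

Definition Dseq (ip : H -> H -> C) (chi : nat -> H) : H -> Prop :=
  fun x => ex_series (fun n => (Cmod (ip x (chi n)))^2).

Definition T_e_chi (ip : H -> H -> C) (e chi : nat -> H) : op :=
  fun x y => Dseq ip chi x /\ is_series (fun n => scal (ip x (chi n)) (e n)) y.

Definition generalized_Riesz_pair (ip : H -> H -> C) (e : nat -> H) (T : op)
    (phi : nat -> H) : Prop :=
  orthonormal_basis ip e /\
  linear_operator T /\ dense (dom T) /\ closed_op T /\
  injective_op T /\ dense (dom (op_inv T)) /\
  (forall n, dom T (e n) /\ dom (op_adj ip (op_inv T)) (e n)) /\
  (forall n, T (e n) (phi n)).

Definition biorthogonal (ip : H -> H -> C) (phi psi : nat -> H) : Prop :=
  forall n m, ip (phi n) (psi m) = if Nat.eqb n m then RtoC 1 else RtoC 0.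

Definition quasi_basis (ip : H -> H -> C) (phi psi : nat -> H)
    (D E : H -> Prop) : Prop :=
  biorthogonal ip phi psi /\
  subspace D /\ dense D /\ subspace E /\ dense E /\
  (forall x, lin_span psi x -> D x) /\ (forall x, D x -> Dseq ip phi x) /\
  (forall x, lin_span phi x -> E x) /\ (forall x, E x -> Dseq ip psi x) /\
  (forall x y, D x -> E y ->
     is_series (V := C_NormedModule)
       (fun k => Cmult (ip x (phi k)) (ip (psi k) y)) (ip x y)).

End Hilbert.

From Stdlib Require Import Reals Lra Psatz Classical ClassicalEpsilon.
From Coquelicot Require Import Coquelicot.
Open Scope R_scope.

(* Both families transfer coefficients to the orthonormal basis:
   [<T a, psi_k> = <a, e_k>] by definition of [psi_k], and [<x, phi_k> = <T^* x, e_k>]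
   for [x] in the domain of [T^*].  The Fourier expansion of [a] in [{e_n}] therefore
   reads [a = T_{e,psi} (T a)], which identifies [T^-1] with [T_{e,psi}] on
   [ran T = D(T^-1)], and likewise [T^*] with [T_{e,phi}] on the domain of [T^*];
   Parseval's identity turns [<x, y> = <T^* x, T^-1 y>] into the quasi-basis
   expansion.  The one analytic ingredient is the density of the domain of [T^*] for
   closed [T]: a vector orthogonal to it is shown to vanish by projecting onto the
   closed graph of [T] in [H + H], the projection being the limit of a minimising
   sequence, which is Cauchy by Apollonius' identity. *)

Ltac C_ring := apply injective_projections; simpl; ring.

Section InnerProduct.
Context {H : CompleteNormedModule C_AbsRing} (ip : H -> H -> C) (Hip : is_inner_product ip).

Lemma ip_plus_l x y z : ip (plus x y) z = Cplus (ip x z) (ip y z).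
Proof. apply Hip. Qed.

Lemma ip_scal_l (a : C) x y : ip (scal a x) y = Cmult a (ip x y).
Proof. apply Hip. Qed.

Lemma ip_conj x y : ip y x = Cconj (ip x y).
Proof. apply Hip. Qed.

Lemma ip_plus_r x y z : ip x (plus y z) = Cplus (ip x y) (ip x z).
Proof. rewrite ip_conj, ip_plus_l, Cplus_conj, <- !ip_conj. reflexivity. Qed.

Lemma ip_scal_r (a : C) x y : ip x (scal a y) = Cmult (Cconj a) (ip x y).
Proof. rewrite ip_conj, ip_scal_l, Cmult_conj, <- ip_conj. reflexivity. Qed.

Lemma ip_zero_l y : ip zero y = RtoC 0.
Proof.
  replace (zero : H) with (scal (K := C_AbsRing) zero (zero : H))
    by exact (scal_zero_l (V := CompleteNormedModule.ModuleSpace C_AbsRing H) zero).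
  rewrite ip_scal_l. C_ring.
Qed.

Lemma ip_zero_r y : ip y zero = RtoC 0.
Proof. rewrite ip_conj, ip_zero_l. C_ring. Qed.

Lemma ip_opp_l x y : ip (opp x) y = Copp (ip x y).
Proof.
  replace (opp x) with (scal (K := C_AbsRing) (opp one) x)
    by exact (scal_opp_one (V := CompleteNormedModule.ModuleSpace C_AbsRing H) x).
  rewrite ip_scal_l. C_ring.
Qed.

Lemma ip_opp_r x y : ip y (opp x) = Copp (ip y x).
Proof. rewrite ip_conj, ip_opp_l, Copp_conj, <- ip_conj. reflexivity. Qed.

Lemma ip_minus_l x y z : ip (minus x y) z = Cminus (ip x z) (ip y z).
Proof. unfold minus. rewrite ip_plus_l, ip_opp_l. reflexivity. Qed.

Lemma ip_minus_r x y z : ip z (minus x y) = Cminus (ip z x) (ip z y).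
Proof. unfold minus. rewrite ip_plus_r, ip_opp_r. reflexivity. Qed.

Lemma ip_sum_l (f : nat -> H) y N :
  ip (sum_n f N) y = sum_n (G := C_AbelianMonoid) (fun k => ip (f k) y) N.
Proof.
  induction N as [|N IH]; [rewrite !sum_O; reflexivity|].
  rewrite !sum_Sn, ip_plus_l, IH. reflexivity.
Qed.

Lemma ip_sum_r (f : nat -> H) y N :
  ip y (sum_n f N) = sum_n (G := C_AbelianMonoid) (fun k => ip y (f k)) N.
Proof.
  induction N as [|N IH]; [rewrite !sum_O; reflexivity|].
  rewrite !sum_Sn, ip_plus_r, IH. reflexivity.
Qed.

Lemma ip_conj_eq a b c d : ip a b = ip c d -> ip b a = ip d c.
Proof. intro h. rewrite (ip_conj a b), (ip_conj c d), h. reflexivity. Qed.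

Definition nsq (x : H) : R := Re (ip x x).

Lemma nsq_ge0 x : 0 <= nsq x.
Proof. apply Hip. Qed.

Lemma ip_self x : ip x x = RtoC (nsq x).
Proof. apply injective_projections; [reflexivity | apply Hip]. Qed.

Lemma norm_nsq x : norm x = sqrt (nsq x).
Proof. apply Hip. Qed.

Lemma nsq_norm x : nsq x = norm x ^ 2.
Proof. rewrite norm_nsq, pow2_sqrt; [reflexivity | apply nsq_ge0]. Qed.

Lemma nsq_eq0 x : nsq x = 0 -> x = zero.
Proof.
  intro h. apply (norm_eq_zero (V := CompleteNormedModule.NormedModule C_AbsRing H)).
  rewrite norm_nsq, h. apply sqrt_0.
Qed.

Lemma eq_of_nsq_minus u v : nsq (minus u v) = 0 -> u = v.
Proof.
  intro h. apply (plus_reg_r (G := CompleteNormedModule.AbelianGroup C_AbsRing H) (opp v)).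
  rewrite plus_opp_r. exact (nsq_eq0 _ h).
Qed.

Lemma nsq_minus_scal a b (t : C) :
  nsq (minus a (scal t b)) =
  nsq a - 2 * Re (Cmult (Cconj t) (ip a b)) + (Cmod t)^2 * nsq b.
Proof.
  unfold nsq. rewrite ip_minus_l, !ip_minus_r, !ip_scal_l, !ip_scal_r, (ip_conj a b), Cmod2_alt.
  rewrite (ip_self b). destruct t as [t1 t2], (ip a b) as [c1 c2].
  unfold Re, Im; simpl. ring.
Qed.

Lemma nsq_plus_orth a b : ip a b = RtoC 0 -> nsq (plus a b) = nsq a + nsq b.
Proof.
  intro h. unfold nsq. rewrite ip_plus_l, !ip_plus_r, h, (ip_conj a b), h.
  unfold Re; simpl; ring.
Qed.

(* The quadratic [s |-> nsq (a - s <a,b> b) >= 0] has nonpositive discriminant. *)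
Lemma cauchy_schwarz a b : Cmod (ip a b) <= norm a * norm b.
Proof.
  rewrite !norm_nsq, <- sqrt_mult by apply nsq_ge0.
  rewrite <- (sqrt_pow2 (Cmod (ip a b))) by apply Cmod_ge_0.
  apply sqrt_le_1_alt.
  set (c := ip a b). set (m := (Cmod c)^2).
  assert (hquad : forall s, 0 <= nsq a - 2 * s * m + s^2 * m * nsq b).
  { intro s. pose proof (nsq_ge0 (minus a (scal (Cmult (RtoC s) c) b))) as h.
    rewrite nsq_minus_scal, Cmod_mult, Cmod_R, Rpow_mult_distr, pow2_abs in h. fold c m in h.
    replace (Re (Cmult (Cconj (Cmult (RtoC s) c)) c)) with (s * m) in h; [lra|].
    unfold m. rewrite Cmod2_alt. destruct c as [c1 c2]. unfold Re, Im; simpl. ring. }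
  pose proof (nsq_ge0 a). pose proof (nsq_ge0 b).
  assert (0 <= m) by (unfold m; nra).
  destruct (Req_dec (nsq b) 0) as [hb | hb].
  - destruct (Req_dec m 0) as [hm | hm]; [nra|].
    specialize (hquad (nsq a / m + 1)). rewrite hb in hquad.
    replace (2 * (nsq a / m + 1) * m) with (2 * nsq a + 2 * m) in hquad by (field; lra). nra.
  - specialize (hquad (/ nsq b)).
    replace (nsq a - 2 * / nsq b * m + (/ nsq b)^2 * m * nsq b)
      with ((nsq a * nsq b - m) / nsq b) in hquad by (field; lra).
    assert (0 < nsq b) by lra.
    destruct (Rle_or_lt m (nsq a * nsq b)) as [hle | hlt]; [exact hle|].
    exfalso. assert (0 < / nsq b) by (apply Rinv_0_lt_compat; lra).
    unfold Rdiv in hquad. nra.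
Qed.

End InnerProduct.

(* Coquelicot has no normaliser for module expressions: an identity [u = v] in [H]
   is proved by expanding [nsq (u - v)] sesquilinearly to [0]. *)
Ltac ip_expand ip Hip := repeat first
  [ rewrite (ip_plus_l ip Hip) | rewrite (ip_plus_r ip Hip)
  | rewrite (ip_minus_l ip Hip) | rewrite (ip_minus_r ip Hip)
  | rewrite (ip_scal_l ip Hip) | rewrite (ip_scal_r ip Hip)
  | rewrite (ip_opp_l ip Hip) | rewrite (ip_opp_r ip Hip)
  | rewrite (ip_zero_l ip Hip) | rewrite (ip_zero_r ip Hip) ].
Ltac vec_eq ip Hip :=
  apply (eq_of_nsq_minus ip Hip); unfold nsq; ip_expand ip Hip; unfold Re; simpl; ring.

Lemma sum_n_kronecker (c : nat -> C) j N :
  sum_n (G := C_AbelianMonoid) (fun k => Cmult (c k) (if Nat.eqb k j then RtoC 1 else RtoC 0)) N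
  = if Nat.leb j N then c j else RtoC 0.
Proof.
  induction N as [|N IH].
  - rewrite sum_O. destruct j; simpl; C_ring.
  - rewrite sum_Sn, IH.
    destruct (Nat.leb j N) eqn:E1.
    + apply Nat.leb_le in E1.
      replace (Nat.leb j (S N)) with true by (symmetry; apply Nat.leb_le; lia).
      replace (Nat.eqb (S N) j) with false by (symmetry; apply Nat.eqb_neq; lia).
      C_ring.
    + apply Nat.leb_gt in E1.
      destruct (Nat.eqb (S N) j) eqn:E2.
      * apply Nat.eqb_eq in E2. subst j. rewrite Nat.leb_refl. C_ring.
      * apply Nat.eqb_neq in E2.
        replace (Nat.leb j (S N)) with false by (symmetry; apply Nat.leb_gt; lia). C_ring.
Qed.

Lemma is_series_Re (f : nat -> C) (l : C) :
  is_series (V := C_NormedModule) f l -> is_series (fun n => Re (f n)) (Re l).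
Proof.
  unfold is_series. intro h.
  rewrite (filterlim_locally_ball_norm (K := C_AbsRing) (U := C_NormedModule)) in h.
  rewrite (filterlim_locally_ball_norm (K := R_AbsRing) (U := R_NormedModule)). intro eps.
  generalize (h eps). apply filter_imp. intros n hn. unfold ball_norm in *.
  assert (E : sum_n (fun k => Re (f k)) n = Re (sum_n (G := C_AbelianMonoid) f n)).
  { clear. induction n as [|n IH]; [rewrite !sum_O | rewrite !sum_Sn, IH]; reflexivity. }
  change (Rabs (sum_n (fun k => Re (f k)) n - Re l) < eps). rewrite E.
  eapply Rle_lt_trans; [| exact hn].
  replace (Re (sum_n (G := C_AbelianMonoid) f n) - Re l)
    with (Re (Cminus (sum_n (G := C_AbelianMonoid) f n) l)) by (unfold Re; simpl; ring).
  apply re_le_Cmod.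
Qed.

Section OrthonormalBasis.
Context {H : CompleteNormedModule C_AbsRing} (ip : H -> H -> C) (Hip : is_inner_product ip)
  (e : nat -> H) (He : orthonormal_basis ip e).

Definition fourier_sum (x : H) (N : nat) : H := sum_n (fun k => scal (ip x (e k)) (e k)) N.

Lemma ip_fourier_sum_e x N j : (j <= N)%nat -> ip (fourier_sum x N) (e j) = ip x (e j).
Proof.
  intro hj. unfold fourier_sum. rewrite (ip_sum_l ip Hip).
  rewrite (sum_n_ext _ (fun k => Cmult (ip x (e k)) (if Nat.eqb k j then RtoC 1 else RtoC 0))).
  - rewrite sum_n_kronecker. apply Nat.leb_le in hj. rewrite hj. reflexivity.
  - intro k. rewrite (ip_scal_l ip Hip), (proj1 He). reflexivity.
Qed.

Lemma ip_fourier_sum_r x N w :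
  (forall j, (j <= N)%nat -> ip w (e j) = RtoC 0) -> ip w (fourier_sum x N) = RtoC 0.
Proof.
  intro h. unfold fourier_sum. rewrite (ip_sum_r ip Hip).
  induction N as [|N IH]; [rewrite sum_O | rewrite sum_Sn, IH by auto];
    rewrite (ip_scal_r ip Hip), h by lia; C_ring.
Qed.

Lemma lin_span_orth_eventually y : lin_span e y -> exists M, forall N w, (M <= N)%nat ->
  (forall j, (j <= N)%nat -> ip w (e j) = RtoC 0) -> ip w y = RtoC 0.
Proof.
  induction 1 as [| n | x y _ [M1 h1] _ [M2 h2] | a x _ [M h]].
  - exists 0%nat. intros. apply (ip_zero_r ip Hip).
  - exists n. intros N w hN hw. apply hw. exact hN.
  - exists (max M1 M2). intros N w hN hw.
    rewrite (ip_plus_r ip Hip), (h1 N w), (h2 N w) by (auto; lia). C_ring.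
  - exists M. intros N w hN hw. rewrite (ip_scal_r ip Hip), (h N w) by auto. C_ring.
Qed.

(* Pythagoras: [x - fourier_sum x N] is orthogonal to [fourier_sum x N - y]. *)
Lemma fourier_sum_best_approx x y : lin_span e y -> exists M, forall N, (M <= N)%nat ->
  norm (minus x (fourier_sum x N)) <= norm (minus x y).
Proof.
  intro hy. destruct (lin_span_orth_eventually y hy) as [M hM]. exists M. intros N hN.
  set (w := minus x (fourier_sum x N)).
  assert (hw : forall j, (j <= N)%nat -> ip w (e j) = RtoC 0).
  { intros j hj. unfold w. rewrite (ip_minus_l ip Hip), ip_fourier_sum_e by exact hj. C_ring. }
  assert (horth : ip w (minus (fourier_sum x N) y) = RtoC 0).
  { rewrite (ip_minus_r ip Hip), (ip_fourier_sum_r x N w hw), (hM N w hN hw). C_ring. }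
  rewrite !(norm_nsq ip Hip). apply sqrt_le_1_alt.
  rewrite (minus_trans (fourier_sum x N) x y), (nsq_plus_orth ip Hip) by exact horth.
  pose proof (nsq_ge0 ip Hip (minus (fourier_sum x N) y)). fold w. lra.
Qed.

Lemma onb_expansion x : is_series (fun k => scal (ip x (e k)) (e k)) x.
Proof.
  unfold is_series. apply (filterlim_locally_ball_norm (K := C_AbsRing)). intro eps.
  destruct (proj2 He x eps (cond_pos eps)) as [y [hy hxy]].
  destruct (fourier_sum_best_approx x y hy) as [M hM]. exists M. intros n hn.
  unfold ball_norm. fold (fourier_sum x n). rewrite <- norm_opp, opp_minus.
  eapply Rle_lt_trans; [apply hM; exact hn | exact hxy].
Qed.

Lemma parseval u a :
  is_series (V := C_NormedModule) (fun k => Cmult (ip u (e k)) (ip (e k) a)) (ip u a).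
Proof.
  pose proof (onb_expansion u) as hu. unfold is_series in *.
  rewrite (filterlim_locally_ball_norm (K := C_AbsRing)
    (U := CompleteNormedModule.NormedModule C_AbsRing H)) in hu.
  rewrite (filterlim_locally_ball_norm (K := C_AbsRing) (U := C_NormedModule)). intro eps.
  assert (hpos : 0 < eps / (norm a + 1)).
  { pose proof (norm_ge_0 a). apply Rdiv_lt_0_compat; [apply cond_pos | lra]. }
  generalize (hu (mkposreal _ hpos)). apply filter_imp. intros n hn.
  unfold ball_norm in *. simpl in hn.
  change (Cmod (Cminus (sum_n (G := C_AbelianMonoid)
            (fun k => Cmult (ip u (e k)) (ip (e k) a)) n) (ip u a)) < eps).
  replace (Cminus _ (ip u a)) with (ip (minus (fourier_sum u n) u) a).
  2:{ rewrite (ip_minus_l ip Hip). unfold fourier_sum. rewrite (ip_sum_l ip Hip).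
      f_equal. apply sum_n_ext. intro k. apply (ip_scal_l ip Hip). }
  eapply Rle_lt_trans; [apply (cauchy_schwarz ip Hip)|].
  pose proof (norm_ge_0 a). pose proof (cond_pos eps).
  apply Rle_lt_trans with (eps / (norm a + 1) * norm a).
  - apply Rmult_le_compat_r; [lra | apply Rlt_le; exact hn].
  - apply (Rmult_lt_reg_r (norm a + 1)); [lra|].
    replace (eps / (norm a + 1) * norm a * (norm a + 1)) with (eps * norm a) by (field; lra).
    lra.
Qed.

Lemma Dseq_onb x : Dseq ip e x.
Proof.
  exists (Re (ip x x)).
  apply (is_series_ext (fun n => Re (Cmult (ip x (e n)) (ip (e n) x)))).
  - intro n. rewrite (ip_conj ip Hip x (e n)), <- Cmod2_conj. reflexivity.
  - apply is_series_Re, parseval.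
Qed.

End OrthonormalBasis.

Lemma inv_INR_S_lt eps : 0 < eps -> exists N, forall n, (N <= n)%nat -> / INR (S n) < eps.
Proof.
  intro heps. destruct (archimed_cor1 eps heps) as [N [hN hN0]]. exists N. intros n hn.
  eapply Rle_lt_trans; [| exact hN].
  apply Rinv_le_contravar; [apply lt_0_INR; exact hN0 | apply le_INR; lia].
Qed.

Lemma minimizing_sequence {A : Type} (P : A -> Prop) (f : A -> R) (a0 : A) :
  P a0 -> (forall a, P a -> 0 <= f a) ->
  exists (d : R) (s : nat -> A), (forall a, P a -> d <= f a) /\
    (forall n, P (s n) /\ f (s n) < d + / INR (S n)).
Proof.
  intros h0 hpos.
  set (E := fun r => exists a, P a /\ r = - f a).
  destruct (completeness E) as [m [hub hleast]].
  { exists 0. intros r [a [ha ->]]. specialize (hpos a ha). lra. }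
  { exists (- f a0), a0. auto. }
  assert (happrox : forall n, exists a, P a /\ f a < - m + / INR (S n)).
  { intro n. assert (0 < / INR (S n)) by (apply Rinv_0_lt_compat, lt_0_INR; lia).
    apply NNPP. intro hn.
    enough (m <= m - / INR (S n)) by lra.
    apply hleast. intros r [a [ha ->]].
    destruct (Rlt_or_le (f a) (- m + / INR (S n))); [exfalso; eauto | lra]. }
  destruct (choice _ happrox) as [s hs].
  exists (- m), s. split; [| exact hs].
  intros a ha. enough (- f a <= m) by lra. apply hub. exists a. auto.
Qed.

Section Projection.
Context {H : CompleteNormedModule C_AbsRing} (ip : H -> H -> C) (Hip : is_inner_product ip).

Lemma nsq_lt_norm_lt v eps : 0 < eps -> nsq ip v < eps^2 -> norm v < eps.
Proof.
  intros heps hv. rewrite (nsq_norm ip Hip) in hv. pose proof (norm_ge_0 v).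
  destruct (Rlt_or_le (norm v) eps) as [h | h]; [exact h | nra].
Qed.

Lemma cvg_of_nsq_cauchy (u : nat -> H) :
  (forall eps, 0 < eps -> exists N, forall n k, (N <= n)%nat -> (N <= k)%nat ->
     nsq ip (minus (u n) (u k)) < eps) ->
  exists l, filterlim u eventually (locally l).
Proof.
  intro hcauchy.
  apply (filterlim_locally_cauchy (U := CompleteNormedModule.CompleteSpace C_AbsRing H)).
  intro eps. destruct (hcauchy (eps^2)) as [N hN]; [apply pow_lt, cond_pos|].
  exists (fun n => (N <= n)%nat). split; [exists N; auto|].
  intros n k hn hk. apply (norm_compat1 (V := CompleteNormedModule.NormedModule C_AbsRing H)).
  apply nsq_lt_norm_lt; [apply cond_pos | apply hN; assumption].
Qed.

Lemma nsq_minus_cvg (p : H) (u : nat -> H) (l : H) :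
  filterlim u eventually (locally l) ->
  is_lim_seq (fun n => nsq ip (minus p (u n))) (nsq ip (minus p l)).
Proof.
  intro hu.
  assert (hm : filterlim (fun n => minus p (u n)) eventually (locally (minus p l))).
  { refine (filterlim_comp_2 (fun _ => p) (fun n => opp (u n)) plus
              (filterlim_const p) _ (filterlim_plus p (opp l))).
    exact (filterlim_comp _ _ _ u opp _ _ _ hu (filterlim_opp l)). }
  pose proof (filterlim_comp _ _ _ _ norm _ _ _ hm (filterlim_norm (minus p l))) as hn.
  rewrite (nsq_norm ip Hip).
  apply (is_lim_seq_ext (fun n => norm (minus p (u n)) * (norm (minus p (u n)) * 1))).
  - intro n. rewrite (nsq_norm ip Hip). reflexivity.
  - apply is_lim_seq_mult'; [exact hn|].
    apply is_lim_seq_mult'; [exact hn | apply is_lim_seq_const].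
Qed.

Definition linear_relation (G : @op H) : Prop :=
  G zero zero /\
  (forall x y x' y', G x y -> G x' y' -> G (plus x x') (plus y y')) /\
  (forall (a : C) x y, G x y -> G (scal a x) (scal a y)).

Variables (G : @op H) (HG : linear_relation G) (p q : H).

Definition sqdist (x w : H) : R := nsq ip (minus p x) + nsq ip (minus q w).

Lemma sqdist_ge0 x w : 0 <= sqdist x w.
Proof.
  pose proof (nsq_ge0 ip Hip (minus p x)). pose proof (nsq_ge0 ip Hip (minus q w)).
  unfold sqdist. lra.
Qed.

Lemma apollonius (c a b : H) :
  4 * nsq ip (minus c (scal (RtoC (/2)) (plus a b))) + nsq ip (minus a b)
  = 2 * nsq ip (minus c a) + 2 * nsq ip (minus c b).
Proof. unfold nsq. ip_expand ip Hip. unfold Re; simpl. field. Qed.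

(* The midpoint of the two pairs lies in [G], hence is at squared distance [>= d]. *)
Lemma near_minimizers_close d x w x' w' eps eps' :
  (forall x w, G x w -> d <= sqdist x w) -> G x w -> G x' w' ->
  sqdist x w < d + eps -> sqdist x' w' < d + eps' ->
  nsq ip (minus x x') + nsq ip (minus w w') < 2 * eps + 2 * eps'.
Proof.
  intros hd hG hG' h h'. destruct HG as [_ [Gplus Gscal]].
  pose proof (hd _ _ (Gscal (RtoC (/2)) _ _ (Gplus _ _ _ _ hG hG'))) as hmid.
  pose proof (apollonius p x x'). pose proof (apollonius q w w').
  (unfold sqdist in *; lra).
Qed.

Lemma sqdist_shift x0 w0 x w (t : C) :
  sqdist (plus x0 (scal t x)) (plus w0 (scal t w))
  = sqdist x0 w0 - 2 * Re (Cmult (Cconj t) (Cplus (ip (minus p x0) x) (ip (minus q w0) w)))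
    + (Cmod t)^2 * (nsq ip x + nsq ip w).
Proof.
  unfold sqdist.
  replace (minus p (plus x0 (scal t x))) with (minus (minus p x0) (scal t x)) by vec_eq ip Hip.
  replace (minus q (plus w0 (scal t w))) with (minus (minus q w0) (scal t w)) by vec_eq ip Hip.
  rewrite !(nsq_minus_scal ip Hip). unfold Re; simpl. ring.
Qed.

(* First variation along [t = s c] for small real [s > 0]. *)
Lemma minimizer_orthogonal x0 w0 :
  G x0 w0 -> (forall x w, G x w -> sqdist x0 w0 <= sqdist x w) ->
  forall x w, G x w -> Cplus (ip (minus p x0) x) (ip (minus q w0) w) = RtoC 0.
Proof.
  intros hG0 hmin x w hxw. destruct HG as [_ [Gplus Gscal]].
  set (c := Cplus (ip (minus p x0) x) (ip (minus q w0) w)).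
  set (K := nsq ip x + nsq ip w).
  assert (hK : 0 <= K)
    by (pose proof (nsq_ge0 ip Hip x); pose proof (nsq_ge0 ip Hip w); unfold K; lra).
  set (s := / (K + 1)).
  assert (hs : 0 < s) by (apply Rinv_0_lt_compat; lra).
  assert (hsK : s * K < 1).
  { unfold s. apply (Rmult_lt_reg_r (K + 1)); [lra|].
    rewrite Rmult_assoc, (Rmult_comm K), <- Rmult_assoc, Rinv_l by lra. lra. }
  pose proof (hmin _ _ (Gplus _ _ _ _ hG0 (Gscal (Cmult (RtoC s) c) _ _ hxw))) as hvar.
  rewrite sqdist_shift in hvar. fold c K in hvar.
  rewrite Cmod_mult, Cmod_R, Rabs_pos_eq, Rpow_mult_distr, Cmod2_alt in hvar by lra.
  replace (Re (Cmult (Cconj (Cmult (RtoC s) c)) c)) with (s * (Re c ^ 2 + Im c ^ 2)) in hvar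
    by (destruct c; unfold Re, Im; simpl; ring).
  assert (hc : Re c ^ 2 + Im c ^ 2 <= 0).
  { assert (hQ : 0 <= s * (Re c ^ 2 + Im c ^ 2) * (s * K - 2)) by nra.
    destruct (Rle_or_lt (Re c ^ 2 + Im c ^ 2) 0) as [h | h]; [exact h|].
    assert (0 < s * (Re c ^ 2 + Im c ^ 2)) by (apply Rmult_lt_0_compat; lra). nra. }
  assert (Re c = 0) by nra. assert (Im c = 0) by nra.
  apply injective_projections; assumption.
Qed.

Hypothesis (HGclosed : closed_op G).

Lemma graph_projection :
  exists x0 w0, G x0 w0 /\
    forall x w, G x w -> Cplus (ip (minus p x0) x) (ip (minus q w0) w) = RtoC 0.
Proof.
  destruct (minimizing_sequence (fun z : H * H => G (fst z) (snd z))
              (fun z => sqdist (fst z) (snd z)) (zero, zero)) as [d [s [hd hs]]].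
  { exact (proj1 HG). }
  { intros z _. apply sqdist_ge0. }
  set (xs := fun n => fst (s n)). set (ws := fun n => snd (s n)).
  assert (hclose : forall eps, 0 < eps -> exists N, forall n k, (N <= n)%nat -> (N <= k)%nat ->
            nsq ip (minus (xs n) (xs k)) < eps /\ nsq ip (minus (ws n) (ws k)) < eps).
  { intros eps heps. destruct (inv_INR_S_lt (eps / 4)) as [N hN]; [lra|].
    exists N. intros n k hn hk.
    pose proof (near_minimizers_close d _ _ _ _ _ _ (fun x w => hd (x, w))
                  (proj1 (hs n)) (proj1 (hs k)) (proj2 (hs n)) (proj2 (hs k))).
    pose proof (hN n hn). pose proof (hN k hk).
    pose proof (nsq_ge0 ip Hip (minus (xs n) (xs k))).
    pose proof (nsq_ge0 ip Hip (minus (ws n) (ws k))).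
    unfold xs, ws in *; cbv beta in *. split; lra. }
  destruct (cvg_of_nsq_cauchy xs) as [xl hxl].
  { intros eps heps. destruct (hclose eps heps) as [N hN]. exists N. intros. apply hN; auto. }
  destruct (cvg_of_nsq_cauchy ws) as [wl hwl].
  { intros eps heps. destruct (hclose eps heps) as [N hN]. exists N. intros. apply hN; auto. }
  assert (hGl : G xl wl) by (apply (HGclosed xs ws); [intro n; apply hs | exact hxl | exact hwl]).
  assert (hlim : is_lim_seq (fun n => sqdist (xs n) (ws n)) (sqdist xl wl))
    by (apply is_lim_seq_plus'; apply nsq_minus_cvg; assumption).
  assert (hmin : sqdist xl wl <= d).
  { apply Rle_plus_epsilon. intros eps heps. destruct (inv_INR_S_lt eps heps) as [N hN].
    refine (is_lim_seq_le_loc _ (fun _ => d + eps) _ _ _ hlim (is_lim_seq_const _)).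
    exists N. intros n hn. pose proof (proj2 (hs n)). pose proof (hN n hn).
    unfold xs, ws; cbv beta. lra. }
  exists xl, wl. split; [exact hGl|].
  apply minimizer_orthogonal; [exact hGl|].
  intros x w hxw. specialize (hd (x, w) hxw). simpl in hd. lra.
Qed.

End Projection.

Lemma filterlim_norm_lt {K : AbsRing} {V : NormedModule K} (u : nat -> V) (x : V) :
  filterlim u eventually (locally x) ->
  forall eps, 0 < eps -> exists N, forall n, (N <= n)%nat -> norm (minus (u n) x) < eps.
Proof.
  rewrite filterlim_locally_ball_norm. intros h eps heps. exact (h (mkposreal eps heps)).
Qed.

Section Adjoint.
Context {H : CompleteNormedModule C_AbsRing} (ip : H -> H -> C) (Hip : is_inner_product ip).

Definition closure (D : H -> Prop) : H -> Prop :=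
  fun x => forall eps, 0 < eps -> exists y, D y /\ norm (minus x y) < eps.

Lemma norm_triangle_eq (u v w : H) : u = plus v w -> norm u <= norm v + norm w.
Proof.
  intros ->. exact (norm_triangle (V := CompleteNormedModule.NormedModule C_AbsRing H) _ _).
Qed.

Lemma closure_incl D y : D y -> closure D y.
Proof.
  intros hy eps heps. exists y. split; [exact hy|].
  rewrite (norm_nsq ip Hip). unfold nsq. rewrite (ip_minus_l ip Hip), !(ip_minus_r ip Hip).
  replace (Re _) with 0 by (unfold Re; simpl; ring). rewrite sqrt_0. exact heps.
Qed.

Lemma closure_subspace D : subspace D -> subspace (closure D).
Proof.
  intros [D0 [Dplus Dscal]]. split; [|split].
  - exact (closure_incl D zero D0).
  - intros x x' hx hx' eps heps.
    destruct (hx (eps / 2)) as [y [hy ny]]; [lra|].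
    destruct (hx' (eps / 2)) as [y' [hy' ny']]; [lra|].
    exists (plus y y'). split; [apply Dplus; assumption|].
    eapply Rle_lt_trans;
      [apply (norm_triangle_eq _ (minus x y) (minus x' y')); vec_eq ip Hip|]. lra.
  - intros a x hx eps heps.
    assert (hpos : 0 < eps / (Cmod a + 1))
      by (pose proof (Cmod_ge_0 a); apply Rdiv_lt_0_compat; lra).
    destruct (hx _ hpos) as [y [hy ny]].
    exists (scal a y). split; [apply Dscal; exact hy|].
    assert (hfac : minus (scal a x) (scal a y) = scal a (minus x y)) by vec_eq ip Hip.
    apply Rle_lt_trans with (norm (scal a (minus x y))); [right; apply f_equal; exact hfac|].
    eapply Rle_lt_trans; [apply (norm_scal (V := CompleteNormedModule.NormedModule C_AbsRing H))|].
    change (abs a) with (Cmod a). pose proof (Cmod_ge_0 a). pose proof (norm_ge_0 (minus x y)).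
    apply Rle_lt_trans with (Cmod a * (eps / (Cmod a + 1))).
    + apply Rmult_le_compat_l; lra.
    + apply (Rmult_lt_reg_r (Cmod a + 1)); [lra|].
      replace (Cmod a * (eps / (Cmod a + 1)) * (Cmod a + 1)) with (Cmod a * eps) by (field; lra).
      lra.
Qed.

Lemma closure_graph_closed D : closed_op (fun x w : H => closure D x /\ w = zero).
Proof.
  intros u v x w huv hu hv. split.
  - intros eps heps.
    destruct (filterlim_norm_lt _ _ hu (eps / 2)) as [N hN]; [lra|].
    destruct (proj1 (huv N) (eps / 2)) as [y [hy ny]]; [lra|].
    exists y. split; [exact hy|]. specialize (hN N (le_n N)).
    rewrite <- norm_opp, opp_minus in hN. change (norm (minus x (u N)) < eps / 2) in hN.
    eapply Rle_lt_trans;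
      [apply (norm_triangle_eq _ (minus x (u N)) (minus (u N) y)); vec_eq ip Hip|].
    lra.
  - assert (hv0 : filterlim (fun _ : nat => zero) eventually (locally w))
      by (eapply filterlim_ext; [| exact hv]; intro n; apply huv).
    exact (filterlim_locally_unique _ _ _ hv0 (filterlim_const (zero : H))).
Qed.

Lemma closure_graph_linear D :
  subspace D -> linear_relation (fun x w : H => closure D x /\ w = zero).
Proof.
  intro hD. destruct (closure_subspace D hD) as [Cl0 [Clplus Clscal]]. split; [|split].
  - split; [exact Cl0 | reflexivity].
  - intros x y x' y' [hx ->] [hx' ->]. split; [apply Clplus; assumption | vec_eq ip Hip].
  - intros a x y [hx ->]. split; [apply Clscal; assumption | vec_eq ip Hip].
Qed.

Lemma dense_of_orthogonal_trivial D : subspace D ->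
  (forall r, (forall d, D d -> ip r d = RtoC 0) -> r = zero) -> dense D.
Proof.
  intros hD horth0 y.
  destruct (graph_projection ip Hip _ (closure_graph_linear D hD) y zero (closure_graph_closed D))
    as [x0 [w0 [[hx0 ->] horth]]].
  assert (hr : minus y x0 = zero).
  { apply horth0. intros d hd.
    rewrite <- (horth d zero (conj (closure_incl D d hd) eq_refl)), (ip_zero_r ip Hip). C_ring. }
  replace y with x0; [exact hx0|].
  symmetry. apply (eq_of_nsq_minus ip Hip).
  rewrite hr. unfold nsq. rewrite (ip_zero_l ip Hip). reflexivity.
Qed.

Lemma adj_subspace (G : @op H) : subspace (dom (op_adj ip G)).
Proof.
  split; [|split].
  - exists zero. intros x w _. rewrite !(ip_zero_r ip Hip). reflexivity.
  - intros y1 y2 [z1 h1] [z2 h2]. exists (plus z1 z2). intros x w hxw.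
    rewrite !(ip_plus_r ip Hip), (h1 x w hxw), (h2 x w hxw). reflexivity.
  - intros a y [z h]. exists (scal a z). intros x w hxw.
    rewrite !(ip_scal_r ip Hip), (h x w hxw). reflexivity.
Qed.

Lemma linear_operator_relation (T : @op H) : linear_operator T -> linear_relation T.
Proof. intros [_ HT]. exact HT. Qed.

Lemma ran_subspace (T : @op H) : linear_relation T -> subspace (ran T).
Proof.
  intros [T0 [Tplus Tscal]]. split; [|split].
  - exists zero. exact T0.
  - intros y1 y2 [a1 h1] [a2 h2]. exists (plus a1 a2). apply Tplus; assumption.
  - intros a y [b h]. exists (scal a b). apply Tscal; assumption.
Qed.

(* Project [(0, r)] onto the graph of [T]: the residual [(-x1, v)] satisfies
   [T^* v = x1], and then [<r, v> = 0] forces [|v|^2 = - |x1|^2]. *)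
Lemma adj_dom_orthogonal_trivial (T : @op H) : linear_operator T -> closed_op T ->
  forall r, (forall d, dom (op_adj ip T) d -> ip r d = RtoC 0) -> r = zero.
Proof.
  intros HT HTc r hr.
  destruct (graph_projection ip Hip T (linear_operator_relation T HT) zero r HTc)
    as [x1 [w1 [h1 horth]]].
  set (v := minus r w1).
  assert (hadj : op_adj ip T v x1).
  { intros x w hxw. apply (ip_conj_eq ip Hip). specialize (horth x w hxw).
    rewrite (ip_minus_l ip Hip), (ip_zero_l ip Hip) in horth. fold v in horth.
    transitivity (Cplus (ip x1 x) (Cplus (Cminus (RtoC 0) (ip x1 x)) (ip v w))); [C_ring|].
    rewrite horth. C_ring. }
  assert (hv : nsq ip v = - nsq ip x1).
  { pose proof (hadj x1 w1 h1) as hw1. pose proof (hr v (ex_intro _ x1 hadj)) as hrv.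
    unfold nsq at 1. unfold v at 1. rewrite (ip_minus_l ip Hip), hrv, hw1, (ip_self ip Hip).
    unfold Re; simpl. ring. }
  pose proof (nsq_ge0 ip Hip v). pose proof (nsq_ge0 ip Hip x1).
  assert (hv0 : v = zero) by (apply (nsq_eq0 ip Hip); lra).
  assert (hx10 : x1 = zero) by (apply (nsq_eq0 ip Hip); lra).
  subst x1. destruct HT as [Tfun [T0 _]]. pose proof (Tfun _ _ _ h1 T0) as hw1.
  transitivity (plus v w1); [unfold v; vec_eq ip Hip|].
  rewrite hv0, hw1. vec_eq ip Hip.
Qed.

Lemma adj_dense (T : @op H) : linear_operator T -> closed_op T -> dense (dom (op_adj ip T)).
Proof.
  intros HT HTc. apply dense_of_orthogonal_trivial; [apply adj_subspace|].
  exact (adj_dom_orthogonal_trivial T HT HTc).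
Qed.

End Adjoint.

Lemma adj_inv_swap {H : CompleteNormedModule C_AbsRing} (ip : H -> H -> C) (G : @op H) x y :
  op_adj ip (op_inv G) x y <-> op_adj ip G y x.
Proof. split; intros h a b hab; symmetry; exact (h _ _ hab). Qed.

Lemma lin_span_incl {H : CompleteNormedModule C_AbsRing} (chi : nat -> H) (D : H -> Prop) :
  subspace D -> (forall n, D (chi n)) -> forall x, lin_span chi x -> D x.
Proof.
  intros [D0 [Dplus Dscal]] hchi. induction 1; auto.
Qed.

Section CoefficientTransfer.
Context {H : CompleteNormedModule C_AbsRing} (ip : H -> H -> C) (Hip : is_inner_product ip)
  (e : nat -> H) (He : orthonormal_basis ip e).

Definition coeff_transfer (S : @op H) (chi : nat -> H) : Prop :=
  forall a y k, S a y -> ip y (chi k) = ip a (e k).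

Lemma Dseq_ran S chi : coeff_transfer S chi -> forall y, ran S y -> Dseq ip chi y.
Proof.
  intros hS y [a ha]. apply (ex_series_ext (fun k => (Cmod (ip a (e k)))^2)).
  - intro k. rewrite (hS a y k ha). reflexivity.
  - exact (Dseq_onb ip Hip e He a).
Qed.

Lemma coeff_transfer_inv_T_e_chi S chi : coeff_transfer S chi ->
  forall x y, S x y <-> op_inv (op_restrict (T_e_chi ip e chi) (ran S)) x y.
Proof.
  intros hS x y. split.
  - intro h. split; [exists x; exact h|]. split; [apply (Dseq_ran S chi hS); exists x; exact h|].
    apply (is_series_ext (fun k => scal (ip x (e k)) (e k))).
    + intro k. rewrite (hS x y k h). reflexivity.
    + exact (onb_expansion ip Hip e He x).
  - intros [[a ha] [_ hs]].
    enough (x = a) by (subst; exact ha).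
    assert (hs' : is_series (fun k => scal (ip a (e k)) (e k)) x).
    { eapply is_series_ext; [| exact hs]. intro k. simpl. rewrite (hS a y k ha). reflexivity. }
    exact (filterlim_locally_unique _ _ _ hs' (onb_expansion ip Hip e He a)).
Qed.

Lemma coeff_transfer_parseval S1 S2 phi psi :
  coeff_transfer S1 phi -> coeff_transfer S2 psi -> forall u x a y, S1 u x -> S2 a y ->
  is_series (V := C_NormedModule) (fun k => Cmult (ip x (phi k)) (ip (psi k) y)) (ip u a).
Proof.
  intros h1 h2 u x a y hux hay.
  apply (is_series_ext (fun k => Cmult (ip u (e k)) (ip (e k) a))).
  - intro k. rewrite (h1 u x k hux), (ip_conj_eq ip Hip _ _ _ _ (h2 a y k hay)). reflexivity.
  - exact (parseval ip Hip e He u a).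
Qed.

End CoefficientTransfer.

Section GeneralizedRiesz.
Context {H : CompleteNormedModule C_AbsRing} (ip : H -> H -> C) (Hip : is_inner_product ip)
  (e phi : nat -> H) (T : @op H) (HT : generalized_Riesz_pair ip e T phi)
  (psi : nat -> H) (Hpsi : forall n, op_adj ip (op_inv T) (e n) (psi n)).

Lemma riesz_coeff_transfer : coeff_transfer ip e T psi.
Proof. intros a y k h. symmetry. exact (Hpsi k y a h). Qed.

Lemma riesz_adj_coeff_transfer : coeff_transfer ip e (op_inv (op_adj ip T)) phi.
Proof.
  intros a y k h. apply (ip_conj_eq ip Hip). apply h.
  destruct HT as [_ [_ [_ [_ [_ [_ [_ HTe]]]]]]]. apply HTe.
Qed.

Lemma riesz_quasi_basis : quasi_basis ip phi psi (dom (op_adj ip T)) (dom (op_inv T)).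
Proof.
  destruct HT as [He [HTlin [_ [HTclosed [_ [HTinv_dense [_ HTe]]]]]]].
  pose proof (adj_subspace ip Hip T) as hadj.
  pose proof (ran_subspace T (linear_operator_relation T HTlin)) as hran.
  refine (conj _ (conj hadj (conj (adj_dense ip Hip T HTlin HTclosed) (conj hran
            (conj HTinv_dense (conj _ (conj _ (conj _ (conj _ _))))))))).
  - intros n m. rewrite (riesz_coeff_transfer _ _ _ (HTe n)). apply He.
  - apply (lin_span_incl psi _ hadj). intro k. exists (e k).
    intros x w hxw. symmetry. exact (Hpsi k w x hxw).
  - exact (Dseq_ran ip Hip e He _ phi riesz_adj_coeff_transfer).
  - apply (lin_span_incl phi _ hran). intro k. exists (e k). apply HTe.
  - exact (Dseq_ran ip Hip e He T psi riesz_coeff_transfer).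
  - intros x y [u hu] [a ha].
    replace (ip x y) with (ip u a) by (symmetry; apply (ip_conj_eq ip Hip); apply hu, ha).
    exact (coeff_transfer_parseval ip Hip e He _ _ phi psi
             riesz_adj_coeff_transfer riesz_coeff_transfer u x a y hu ha).
Qed.

End GeneralizedRiesz.

Theorem proposition3p4 (H : CompleteNormedModule C_AbsRing) (ip : H -> H -> C)
  (Hip : is_inner_product ip) (e phi : nat -> H) (T : op)
  (HT : generalized_Riesz_pair ip e T phi)
  (psiT : nat -> H) (Hpsi : forall n, op_adj ip (op_inv T) (e n) (psiT n)) :
  quasi_basis ip phi psiT (dom (op_adj ip T)) (dom (op_inv T)) /\
  (forall x y, T x y <-> op_inv (op_restrict (T_e_chi ip e psiT) (dom (op_inv T))) x y) /\
  (forall x y, op_adj ip (op_inv T) x y <->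
               op_inv (op_restrict (T_e_chi ip e phi) (dom (op_adj ip T))) x y).
Proof.
  pose proof (proj1 HT) as He.
  split; [| split].
  - exact (riesz_quasi_basis ip Hip e phi T HT psiT Hpsi).
  - exact (coeff_transfer_inv_T_e_chi ip Hip e He T psiT (riesz_coeff_transfer ip e T psiT Hpsi)).
  - intros x y. rewrite adj_inv_swap.
    exact (coeff_transfer_inv_T_e_chi ip Hip e He _ phi
             (riesz_adj_coeff_transfer ip Hip e phi T HT) x y).
Qed.
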